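(* Let $A$ be an aggregation function having $1$ as a left neutral element ($A(1,x)=x$ for all $x\in[0,1]$). If a fuzzy implication $I$ satisfies (A5) with $A$, then $I(1,b)\le b$ for all $b\in[0,1]$.
   Context: Aggregation function: $A:[0,1]^2\to[0,1]$ non-decreasing in each variable with $A(0,0)=0$, $A(1,1)=1$. Fuzzy implication: $I:[0,1]^2\to[0,1]$ non-increasing in the first and non-decreasing in the second variable with $I(0,0)=I(1,1)=1$, $I(1,0)=0$. A fuzzy set on a nonempty set $U$ is a map $U\to[0,1]$, normal if it attains $1$. ''$I$ satisfies (A5) with $A$'' means: for all nonempty sets $U,V$, all normal fuzzy sets $D$ on $U$, $B$ on $V$ and every $y\in V$, $\sup_{x\in U}A(D(x),I(D(x),B(y)))=B(y)$. *)

(* real numbers R; functions on [0,1] modelled as R -> R -> R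
   whose relevant properties are required on [0,1]. *)
From Stdlib Require Import Reals.
Open Scope R_scope.

Definition in01 (x : R) : Prop := 0 <= x <= 1.

Definition aggregation (A : R -> R -> R) : Prop :=
  (forall x y, in01 x -> in01 y -> in01 (A x y)) /\
  (forall x1 x2 y, in01 x1 -> in01 x2 -> in01 y -> x1 <= x2 -> A x1 y <= A x2 y) /\
  (forall x y1 y2, in01 x -> in01 y1 -> in01 y2 -> y1 <= y2 -> A x y1 <= A x y2) /\
  A 0 0 = 0 /\ A 1 1 = 1.

Definition fuzzy_implication (I : R -> R -> R) : Prop :=
  (forall x y, in01 x -> in01 y -> in01 (I x y)) /\
  (forall x1 x2 y, in01 x1 -> in01 x2 -> in01 y -> x1 <= x2 -> I x2 y <= I x1 y) /\
  (forall x y1 y2, in01 x -> in01 y1 -> in01 y2 -> y1 <= y2 -> I x y1 <= I x y2) /\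
  I 0 0 = 1 /\ I 1 1 = 1 /\ I 1 0 = 0.

Definition left_neutral_one (A : R -> R -> R) : Prop :=
  forall x, in01 x -> A 1 x = x.

Definition fuzzy_set {U : Type} (D : U -> R) : Prop := forall x, in01 (D x).
Definition normal {U : Type} (D : U -> R) : Prop := exists x, D x = 1.

Definition satisfies_A5 (I A : R -> R -> R) : Prop :=
  forall (U V : Type), inhabited U -> inhabited V ->
  forall (D : U -> R) (B : V -> R),
    fuzzy_set D -> normal D -> fuzzy_set B -> normal B ->
    forall y : V,
      is_lub (fun r => exists x : U, r = A (D x) (I (D x) (B y))) (B y).

(* Evaluate (A5) on a one-point universe with D = 1 and a two-point universe
   where B takes the values 1 and b: the term of the supremum at the single
   point is A(1, I(1,b)) = I(1,b), so it is bounded by B = b. *)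
From Stdlib Require Import Reals Lra.
Open Scope R_scope.

Lemma A5_le (I A : R -> R -> R) (U V : Type) (D : U -> R) (B : V -> R) :
  satisfies_A5 I A ->
  fuzzy_set D -> normal D -> fuzzy_set B -> normal B ->
  forall x y, A (D x) (I (D x) (B y)) <= B y.
Proof.
  intros H5 HD HDn HB HBn x y.
  assert (HU : inhabited U) by exact (inhabits x).
  assert (HV : inhabited V) by exact (inhabits y).
  destruct (H5 U V HU HV D B HD HDn HB HBn y) as [Hub _].
  apply Hub; exists x; reflexivity.
Qed.

Definition const1 (_ : unit) : R := 1.

Definition normal_with (b : R) (v : bool) : R := if v then 1 else b.

Lemma fuzzy_set_const1 : fuzzy_set const1.
Proof. intros x; unfold const1, in01; lra. Qed.

Lemma normal_const1 : normal const1.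
Proof. exists tt; reflexivity. Qed.

Lemma fuzzy_set_normal_with (b : R) : in01 b -> fuzzy_set (normal_with b).
Proof. intros Hb [|]; simpl; [unfold in01; lra | exact Hb]. Qed.

Lemma normal_normal_with (b : R) : normal (normal_with b).
Proof. exists true; reflexivity. Qed.

Theorem proposition3p8 (A I : R -> R -> R) :
  aggregation A -> left_neutral_one A -> fuzzy_implication I ->
  satisfies_A5 I A ->
  forall b, in01 b -> I 1 b <= b.
Proof.
  intros _ Hn [HIr _] H5 b Hb.
  assert (Hle := A5_le I A unit bool const1 (normal_with b) H5 fuzzy_set_const1
                  normal_const1 (fuzzy_set_normal_with b Hb) (normal_normal_with b)
                  tt false).
  simpl in Hle; unfold const1 in Hle.
  rewrite Hn in Hle; [exact Hle|].
  apply HIr; [unfold in01; lra | exact Hb].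
Qed.
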